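(* Let $K$ be a valued field and $d\ge1$. For any $d+2$ points $x_1,\dots,x_{d+2}\in K^d$ (not necessarily distinct), there is $i\in\{1,\dots,d+2\}$ such that $x_i\in\operatorname{conv}(\{x_j: j\ne i\})$.
   Context: $K$ is a field with a valuation $\nu:K\to\Gamma\cup\{\infty\}$ and valuation ring $\mathcal{O}=\{x:\nu(x)\ge 0\}$. For $Y\subseteq K^d$, $\operatorname{conv}(Y)=\{\sum_{i=1}^n\alpha_iy_i: n\ge1, y_i\in Y,\alpha_i\in\mathcal{O},\sum_i\alpha_i=1\}$ (the smallest convex set containing $Y$, where a set is convex if closed under all such combinations). *)

From HB Require Import structures.
From mathcomp Require Import all_boot all_order all_algebra.
Set Implicit Arguments. Unset Strict Implicit. Unset Printing Implicit Defensive.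
Import GRing.Theory.
Local Open Scope ring_scope.

(* The value set is
   Gamma ∪ {∞}, modelled as [option Gamma] with [None] = ∞. *)

Definition is_ordered_group (G : zmodType) (le : rel G) : Prop :=
  [/\ (forall a, le a a),
      (forall a b, le a b -> le b a -> a = b),
      (forall a b c, le a b -> le b c -> le a c),
      (forall a b, le a b \/ le b a)
    & (forall a b c, le a b -> le (a + c) (b + c))].

Definition vle (G : zmodType) (le : rel G) (a b : option G) : Prop :=
  match a, b with
  | _, None => True
  | None, Some _ => False
  | Some x, Some y => le x y
  end.

Definition vadd (G : zmodType) (a b : option G) : option G :=
  match a, b with
  | Some x, Some y => Some (x + y)
  | _, _ => None
  end.

Definition is_valuation (K : fieldType) (G : zmodType) (le : rel G)
    (nu : K -> option G) : Prop :=
  [/\ is_ordered_group le,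
      (forall x, nu x = None <-> x = 0),
      (forall x y, nu (x * y) = vadd (nu x) (nu y))
    & (forall x y, vle le (nu x) (nu (x + y)) \/ vle le (nu y) (nu (x + y)))].

Definition val_ring (K : fieldType) (G : zmodType) (le : rel G)
    (nu : K -> option G) (x : K) : Prop :=
  vle le (Some 0) (nu x).

Definition vconv (K : fieldType) (G : zmodType) (le : rel G)
    (nu : K -> option G) (d : nat) (Y : 'rV[K]_d -> Prop) (z : 'rV[K]_d) : Prop :=
  exists (n : nat) (a : 'I_n -> K) (y : 'I_n -> 'rV[K]_d),
    [/\ (0 < n)%N,
        (forall i, Y (y i)),
        (forall i, val_ring le nu (a i)),
        \sum_(i < n) a i = 1
      & z = \sum_(i < n) a i *: y i].

(* The proof has two independent ingredients:
   - linear algebra: more than d+1 points of K^d are affinely dependent,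
     i.e. there are l_j, not all zero, with sum_j l_j = 0 and
     sum_j l_j x_j = 0 (a nonzero kernel vector of the (d+1)-column matrix
     whose rows are (x_j, 1));
   - valuation theory: choose i with nu(l_i) minimal, so l_i <> 0 and every
     a_j := -l_j / l_i has nu(a_j) >= 0.  Dividing both relations by -l_i
     gives sum_{j<>i} a_j = 1 and x_i = sum_{j<>i} a_j x_j, a valued convex
     combination of the other points. *)

From HB Require Import structures.
From mathcomp Require Import all_boot all_order all_algebra.
From mathcomp Require Import zify.
Set Implicit Arguments. Unset Strict Implicit.
Local Open Scope ring_scope.
Import GRing.Theory.

Lemma seq_min (T : eqType) (R : T -> T -> Prop)
    (Rtrans : forall a b c, R a b -> R b c -> R a c)
    (Rtotal : forall a b, R a b \/ R b a) (s : seq T) (x0 : T) :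
  x0 \in s -> exists2 m, m \in s & forall y, y \in s -> R m y.
Proof.
have Rrefl a : R a a by case: (Rtotal a a).
case: s => // a s _; elim: s a => [|b s IH] a.
  by exists a; rewrite ?mem_head // => y; rewrite inE => /eqP ->.
have [m ms hm] := IH b.
case: (Rtotal a m) => h.
- exists a; first exact: mem_head.
  by move=> y; rewrite inE => /orP[/eqP -> // | ys]; apply: Rtrans h (hm _ ys).
- exists m; first by rewrite inE ms orbT.
  by move=> y; rewrite inE => /orP[/eqP -> | ys] //; apply: hm.
Qed.

Section Valuation.
Variables (K : fieldType) (G : zmodType) (le : rel G) (nu : K -> option G).
Hypothesis Hnu : is_valuation le nu.

Lemma nu0 : nu 0 = None.
Proof. by case: Hnu => _ H0 _ _; apply/H0. Qed.

Lemma nu1 : nu 1 = Some 0.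
Proof.
case: Hnu => _ H0 HM _.
case E: (nu 1) => [t|]; last by move/H0: E => /eqP; rewrite oner_eq0.
have := HM 1 1; rewrite mulr1 E /= => -[tt].
by congr Some; apply: (addrI t); rewrite addr0.
Qed.

(* nu(-1) = 0: from nu(-1) + nu(-1) = nu(1) = 0, and s + s = 0 forces
   s = 0 in a totally ordered group. *)
Lemma nuN1 : nu (-1) = Some 0.
Proof.
case: Hnu => [[_ antisym _ total add] H0 HM _].
case E: (nu (-1)) => [s|]; last first.
  by move/H0: E => /eqP; rewrite oppr_eq0 oner_eq0.
have := HM (-1) (-1); rewrite mulrNN mulr1 nu1 E /= => -[ss].
congr Some; case: (total 0 s) => h; apply: antisym => //;
  by have := add _ _ s h; rewrite add0r -ss.
Qed.

Lemma nuN y : nu (- y) = nu y.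
Proof.
case: Hnu => _ _ HM _.
by rewrite -mulN1r HM nuN1 /=; case: (nu y) => //= g; rewrite add0r.
Qed.

Lemma vle_trans a b c : vle le a b -> vle le b c -> vle le a c.
Proof.
case: Hnu => [[_ _ trans _ _] _ _ _].
by case: a; case: b; case: c => //= *; apply: trans; eauto.
Qed.

Lemma vle_total a b : vle le a b \/ vle le b a.
Proof. by case: Hnu => [[_ _ _ total _] _ _ _]; case: a; case: b => /=; auto. Qed.

Lemma val_ring_div b c :
  c != 0 -> vle le (nu c) (nu b) -> val_ring le nu (b / c).
Proof.
move=> c0; case: Hnu => [[_ _ _ _ add] H0 HM _].
rewrite -{1}(divfK c0 b) HM /val_ring.
case Ec: (nu c) => [gc|]; last by move/H0: Ec => /eqP; rewrite (negbTE c0).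
case: (nu (b / c)) => [g|] //= h.
by have := add _ _ (- gc) h; rewrite addrK subrr.
Qed.

Lemma min_val_index (I : finType) (l : I -> K) (i0 : I) :
  exists i, forall j, vle le (nu (l i)) (nu (l j)).
Proof.
have [i _ imin] := seq_min (fun a b c => @vle_trans (nu (l a)) (nu (l b)) (nu (l c)))
  (fun a b => vle_total (nu (l a)) (nu (l b))) (mem_enum I i0).
by exists i => j; apply: imin; rewrite mem_enum.
Qed.

Lemma min_val_neq0 (I : Type) (l : I -> K) (i : I) :
  (forall j, vle le (nu (l i)) (nu (l j))) -> (exists j, l j != 0) ->
  l i != 0.
Proof.
move=> hmin [j lj0]; apply: contraNneq lj0 => li0.
have := hmin j; rewrite li0 nu0; case: Hnu => _ H0 _ _.
by case E: (nu (l j)) => //= _; apply/eqP/H0.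
Qed.

End Valuation.

Lemma affine_dependence (K : fieldType) (n d : nat) (x : 'I_n -> 'rV[K]_d) :
  (d.+1 < n)%N ->
  exists l : 'I_n -> K,
    [/\ exists j, l j != 0, \sum_j l j = 0 & \sum_j l j *: x j = 0].
Proof.
move=> ltdn.
pose X : 'M[K]_(n, d) := \matrix_j x j.
pose one : 'M[K]_(n, 1) := const_mx 1.
have : kermx (row_mx X one) != 0.
  apply/eqP => ker0; have := mxrank_ker (row_mx X one).
  by rewrite ker0 mxrank0; have := rank_leq_col (row_mx X one); lia.
case/rowV0Pn => v /sub_kermxP; rewrite mul_mx_row -row_mx0 => /eq_row_mx[vX v1] v0.
exists (v 0); split.
- apply/existsP; apply: contraNT v0 => /existsPn vz.
  by apply/eqP/rowP => j; rewrite mxE; apply/eqP/negPn/vz.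
- have := congr1 (fun A : 'M[K]_1 => A 0 0) v1; rewrite !mxE; apply: etrans.
  by apply: eq_bigr => j _; rewrite mxE mulr1.
- apply: etrans _ vX; rewrite mulmx_sum_row; apply: eq_bigr => j _.
  by congr (_ *: _); apply/rowP => k; rewrite !mxE.
Qed.

Lemma affine_relation_vconv (K : fieldType) (G : zmodType) (le : rel G)
    (nu : K -> option G) (Hnu : is_valuation le nu) (n d : nat)
    (x : 'I_n.+1 -> 'rV[K]_d) (l : 'I_n.+1 -> K) (i : 'I_n.+1) :
  (0 < n)%N -> \sum_j l j = 0 -> \sum_j l j *: x j = 0 -> l i != 0 ->
  (forall j, vle le (nu (l i)) (nu (l j))) ->
  vconv le nu (fun y => exists2 j, j != i & y = x j) (x i).
Proof.
move=> n0 suml sumlx li0 hmin.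
exists n, (fun k => - l (lift i k) / l i), (fun k => x (lift i k)); split => //.
- by move=> k; exists (lift i k); rewrite // eq_sym neq_lift.
- by move=> k; apply: (val_ring_div Hnu); rewrite // (nuN Hnu).
- move: suml; rewrite (bigD1_ord i) //= => /eqP; rewrite addrC addr_eq0 => /eqP.
  by rewrite -mulr_suml sumrN => ->; rewrite opprK divff.
- move: sumlx; rewrite (bigD1_ord i) //= => /eqP; rewrite addrC addr_eq0 => /eqP e.
  apply: (scalerI li0); rewrite -[LHS]opprK -e scaler_sumr -sumrN.
  by apply: eq_bigr => k _; rewrite scalerA mulrC divfK // scaleNr.
Qed.

Theorem proposition2p7 (K : fieldType) (G : zmodType) (le : rel G)
    (nu : K -> option G) (Hnu : is_valuation le nu)
    (d : nat) (Hd : (1 <= d)%N) (x : 'I_d.+2 -> 'rV[K]_d) :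
  exists i : 'I_d.+2,
    vconv le nu (fun y => exists2 j : 'I_d.+2, j != i & y = x j) (x i).
Proof.
have [l [l_nz suml sumlx]] := affine_dependence x (ltnSn d.+1).
have [i imin] := min_val_index Hnu l ord0.
have li0 := min_val_neq0 Hnu imin l_nz.
by exists i; apply: affine_relation_vconv suml sumlx li0 imin.
Qed.
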